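(* Let $\beta_1,\dots,\beta_{14}$ be a basis of $iD$ with $\operatorname{Tr}(\beta_a\beta_b)=\frac12\delta_{ab}$, where $D\subset\mathfrak{so}(7)$ is the derivation algebra of the octonions acting on the imaginary octonions $\operatorname{Im}(\mathbb O)\cong\mathbb R^7$. If $v\in\mathbb R^{14}$ is such that $\frac17(\mathbf 1_7+\sum_iv_i\beta_i)$ is a density matrix, then $|v|^2\le 8(10-\sqrt{65})$; in particular $|v|\le 3.93$.
   Context: A density matrix is a positive semidefinite Hermitian matrix of trace 1. The $\beta_i$ are Hermitian $7\times7$ matrices spanning $i$ times the 7-dimensional fundamental representation of $\mathfrak g_2$. *)

From HB Require Import structures.
From mathcomp Require Import all_boot all_order all_algebra.
From mathcomp Require Import complex.
Set Implicit Arguments. Unset Strict Implicit. Unset Printing Implicit Defensive.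
Import Order.TTheory GRing.Theory Num.Theory.
Local Open Scope ring_scope.

Section Octonions.
Variable R : rcfType.

(* Fano-plane convention: lines {t, t+1, t+3} (mod 7), e_t e_(t+1) = e_(t+3). *)
Definition fano_line (a b c : nat) : bool :=
  ((b == (a + 1) %% 7) && (c == (a + 3) %% 7))%N.
Definition fano_pos (i j k : 'I_7) : bool :=
  [|| fano_line i j k, fano_line j k i | fano_line k i j].
Definition oct_eps (i j k : 'I_7) : R :=
  if fano_pos i j k then 1 else if fano_pos j i k then -1 else 0.

(* Octonions O = R (+) Im(O), Im(O) = R^7 as column vectors *)
Definition oct := (R * 'cV[R]_7)%type.

Definition im_dot (u w : 'cV[R]_7) : R := \sum_i u i 0 * w i 0.
Definition im_cross (u w : 'cV[R]_7) : 'cV[R]_7 :=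
  \col_k \sum_i \sum_j oct_eps i j k * u i 0 * w j 0.

Definition oct_mul (x y : oct) : oct :=
  (x.1 * y.1 - im_dot x.2 y.2, x.1 *: y.2 + y.1 *: x.2 + im_cross x.2 y.2).

Definition oct_ext (A : 'M[R]_7) (x : oct) : oct := (0, A *m x.2).

Definition is_oct_der (A : 'M[R]_7) : Prop :=
  forall x y : oct,
    oct_ext A (oct_mul x y) = oct_mul (oct_ext A x) y + oct_mul x (oct_ext A y).

End Octonions.

Local Open Scope complex_scope.
Definition cR (R : rcfType) (x : R) : R[i] := x%:C.
Definition iC (R : rcfType) : R[i] := 'i.
Local Close Scope complex_scope.

Section Density.
Variable C : numClosedFieldType.
Definition adjmx n (A : 'M[C]_n) : 'M[C]_n := (map_mx Num.conj A)^T.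
Definition hermmx n (A : 'M[C]_n) : Prop := adjmx A = A.
Definition psdmx n (A : 'M[C]_n) : Prop :=
  hermmx A /\ forall x : 'cV[C]_n, 0 <= ((map_mx Num.conj x)^T *m A *m x) 0 0.
Definition density_mx n (A : 'M[C]_n) : Prop := psdmx A /\ \tr A = 1.
End Density.

From HB Require Import structures.
From mathcomp Require Import all_boot all_order all_algebra.
From mathcomp Require Import complex.
From mathcomp Require Import ring lra.
Set Implicit Arguments. Unset Strict Implicit. Unset Printing Implicit Defensive.
Import Order.TTheory GRing.Theory Num.Theory.
Local Open Scope ring_scope.

(* Each beta_a is
   i times a real matrix, so X := sum_a v_a beta_a = i M with M real, and the
   normalisation gives |v|^2 = 2 Tr(X^2).  Hermiticity of the density matrix
   makes M skew-symmetric, so Tr(X^2) = -Tr(M^2) = |M|_F^2, and positivity of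
   1 + i M tested on M e_j + i e_j bounds every column of M by 1 in norm.
   Hence |v|^2 <= 2 * 7 = 14, which is below 8 (10 - sqrt 65) ~ 15.5, and
   sqrt 14 < 3.93. *)

Lemma mxtrace_sqr_sum_orth (C : comPzRingType) (n m : nat)
    (beta : 'I_m -> 'M[C]_n) (k : C) (c : 'I_m -> C) :
  (forall a b, \tr (beta a *m beta b) = (a == b)%:R * k) ->
  \tr ((\sum_a c a *: beta a) *m (\sum_a c a *: beta a)) = (\sum_a c a ^+ 2) * k.
Proof.
move=> horth; rewrite mulmx_suml raddf_sum mulr_suml; apply: eq_bigr => a _.
rewrite mulmx_sumr raddf_sum (bigD1 a) //= big1 => [|b /negbTE nba].
  by rewrite addr0 -scalemxAl -scalemxAr !mxtraceZ horth eqxx mul1r mulrA expr2.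
by rewrite -scalemxAl -scalemxAr !mxtraceZ horth eq_sym nba !mul0r !mulr0.
Qed.

Lemma mxtrace_sqr_skew (R : pzRingType) (n : nat) (M : 'M[R]_n) :
  M^T = - M -> \tr (M *m M) = - \sum_j \sum_k M j k ^+ 2.
Proof.
move=> skewM; rewrite -sumrN; apply: eq_bigr => j _; rewrite mxE -sumrN.
apply: eq_bigr => k _; have := congr1 (fun A : 'M_n => A j k) skewM.
by rewrite !mxE => ->; rewrite expr2 mulrN.
Qed.

Lemma quad_form_add_sqrtN1 (C : comPzRingType) n (i : C) (U W : 'cV[C]_n) (N : 'M[C]_n) :
  i * i = -1 ->
  (U^T - i *: W^T) *m N *m (U + i *: W)
  = U^T *m N *m U + W^T *m N *m W + i *: (U^T *m N *m W - W^T *m N *m U).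
Proof.
move=> ii; rewrite mulmxBl mulmxDr !mulmxBl -!scalemxAl -!scalemxAr !scalerBr.
by rewrite scalerA ii scaleN1r opprK addrACA [RHS]addrACA [- _ + _]addrC.
Qed.

Lemma psdmxZ (C : numClosedFieldType) n (c : C) (A : 'M[C]_n) :
  0 < c -> psdmx (c *: A) -> psdmx A.
Proof.
move=> c_gt0 [hermcA psdcA]; split.
  apply: (scalerI (lt0r_neq0 c_gt0)); rewrite -[RHS]hermcA /adjmx map_mxZ /=.
  by rewrite conj_Creal ?gtr0_real // [(_ *: _)^T]linearZ.
by move=> x; have := psdcA x; rewrite -scalemxAr -scalemxAl mxE pmulr_rge0.
Qed.

(* Makes [map_mx cR] subject to the lemmas on matrices mapped by a ring morphism. *)
HB.instance Definition _ (R : rcfType) :=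
  GRing.RMorphism.copy (@cR R) (real_complex R).

Section ComplexifiedRealMatrices.
Variable R : rcfType.
Local Notation cmx := (map_mx (@cR R)).
Local Notation i := (iC R).

Lemma conj_complex (x : R[i]) : Num.conj x = conjc x.
Proof. by case: x. Qed.

Lemma conj_cR (x : R) : Num.conj (cR x) = cR x.
Proof. by rewrite conj_complex conjc_real. Qed.

Lemma conj_iC : Num.conj i = - i.
Proof. by rewrite conj_complex /iC; simpc. Qed.

Lemma mul_iC_iC : i * i = -1.
Proof. by rewrite -expr2 sqr_i. Qed.

Lemma iC_neq0 : i != 0.
Proof. by apply/eqP => /(congr1 (@complex.Im R)) /= /eqP; rewrite oner_eq0. Qed.

Lemma conj_cmx m n (A : 'M[R]_(m, n)) : map_mx Num.conj (cmx A) = cmx A.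
Proof. by apply/matrixP=> j k; rewrite !mxE conj_cR. Qed.

Lemma cmx_trmx m n (A : 'M[R]_(m, n)) : cmx A^T = (cmx A)^T.
Proof. by apply/matrixP=> j k; rewrite !mxE. Qed.

Lemma hermmx_one_add_iC_skew n (M : 'M[R]_n) :
  hermmx (1%:M + i *: cmx M) -> M^T = - M.
Proof.
rewrite /hermmx /adjmx map_mxD map_mx1 map_mxZ /= conj_cmx conj_iC.
rewrite [(_ + _)^T]linearD /= [(_ *: _)^T]linearZ /= trmx1 => /addrI; rewrite scaleNr -scalerN => /scalerI.
move=> /(_ iC_neq0); rewrite -cmx_trmx -map_mxN.
by move=> /map_mx_inj /(congr1 -%R); rewrite opprK.
Qed.

Lemma cmx_quad_form n (u w : 'cV[R]_n) (N : 'M[R]_n) :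
  (map_mx Num.conj (cmx u + i *: cmx w))^T *m cmx N *m (cmx u + i *: cmx w)
  = cmx (u^T *m N *m u + w^T *m N *m w) + i *: cmx (u^T *m N *m w - w^T *m N *m u).
Proof.
rewrite map_mxD map_mxZ /= !conj_cmx conj_iC scaleNr.
rewrite [(_ - _)^T]linearB /= [(_ *: _)^T]linearZ /=.
rewrite (quad_form_add_sqrtN1 (cmx u) (cmx w) (cmx N) mul_iC_iC).
by rewrite map_mxD map_mxB !map_mxM !cmx_trmx.
Qed.

Lemma ge0_cmx_iC_entry m n (A B C D : 'M[R]_(m, n)) j k :
  0 <= (cmx A + i *: cmx B + i *: (cmx C + i *: cmx D)) j k -> D j k <= A j k.
Proof. by rewrite !mxE lecE => /andP[_] /=; lra. Qed.

Lemma psdmx_one_add_iC_col_norm n (M : 'M[R]_n) (j : 'I_n) :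
  M^T = - M -> psdmx (1%:M + i *: cmx M) -> \sum_k M k j ^+ 2 <= 1.
Proof.
(* The real part of x^* (1 + i M) x at x = M e_j + i e_j is 1 - |M e_j|^2. *)
move=> skewM [_ /(_ (cmx (col j M) + i *: cmx (delta_mx j 0)))].
set u := col j M; set w : 'cV[R]_n := delta_mx j 0.
have Mw : M *m w = u by rewrite /u colE.
have wM : w^T *m M = - u^T.
  apply/rowP => k; rewrite trmx_delta -rowE !mxE.
  by have := congr1 (fun A : 'M_n => A k j) skewM; rewrite !mxE.
have uu : (u^T *m u) 0 0 = \sum_k M k j ^+ 2.
  by rewrite mxE; apply: eq_bigr => k _; rewrite !mxE expr2.
have ww : (w^T *m w) 0 0 = 1 by rewrite trmx_delta mul_delta_mx mxE !eqxx.
have xx := cmx_quad_form u w 1%:M; rewrite map_mx1 !mulmx1 in xx.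
rewrite [_ *m (1%:M + _)]mulmxDr mulmx1 mulmxDl -scalemxAr -scalemxAl xx cmx_quad_form.
rewrite -!mulmxA Mw !mulmxA wM mulNmx opprK => /ge0_cmx_iC_entry.
by rewrite ![fun_of_matrix (_ + _) _ _]mxE uu ww; lra.
Qed.

Lemma psdmx_one_add_iC_sum_sqr n (M : 'M[R]_n) :
  M^T = - M -> psdmx (1%:M + i *: cmx M) -> \sum_j \sum_k M j k ^+ 2 <= n%:R.
Proof.
move=> skewM psdM; rewrite exchange_big /=.
rewrite -[n in n%:R]card_ord -sumr_const.
by apply: ler_sum => j _; apply: psdmx_one_add_iC_col_norm.
Qed.

Lemma mxtrace_sqr_iC_skew n (M : 'M[R]_n) :
  M^T = - M -> \tr ((i *: cmx M) *m (i *: cmx M)) = cR (\sum_j \sum_k M j k ^+ 2).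
Proof.
move=> skewM; rewrite -scalemxAl -scalemxAr scalerA mul_iC_iC -map_mxM mxtraceZ.
by rewrite trace_map_mx mxtrace_sqr_skew // rmorphN mulN1r opprK.
Qed.

End ComplexifiedRealMatrices.

Lemma bounds_of_le14 (R : rcfType) (s : R) : 0 <= s <= 14%:R ->
  s <= 8%:R * (10%:R - Num.sqrt 65%:R) /\ Num.sqrt s <= 393%:R / 100%:R.
Proof.
move=> /andP[s_ge0 s_le14].
have sqrt_le (x q : R) : 0 <= q -> x <= q ^+ 2 -> Num.sqrt x <= q.
  by move=> q_ge0 x_le; rewrite -(ger0_norm q_ge0) -sqrtr_sqr ler_sqrt // sqr_ge0.
have sqrt65 : Num.sqrt 65%:R <= 33%:R / 4%:R :> R by apply: sqrt_le; lra.
by split; [lra | apply: sqrt_le; lra].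
Qed.

Theorem mainTheorem18 (R : rcfType) (beta : 'I_14 -> 'M[R[i]]_7)
  (hin : forall a, exists2 A : 'M[R]_7, is_oct_der A &
           beta a = iC R *: map_mx (@cR R) A)
  (hspan : forall A : 'M[R]_7, is_oct_der A ->
           exists c : 'I_14 -> R,
             iC R *: map_mx (@cR R) A = \sum_a cR (c a) *: beta a)
  (horth : forall a b, \tr (beta a *m beta b) = (a == b)%:R / 2)
  (v : 'I_14 -> R)
  (hrho : density_mx ((7%:R)^-1 *: (1%:M + \sum_a cR (v a) *: beta a))) :
  \sum_a v a ^+ 2 <= 8%:R * (10%:R - Num.sqrt 65%:R)
  /\ Num.sqrt (\sum_a v a ^+ 2) <= 393%:R / 100%:R.
Proof.
have [A _ betaE] := fin_all_exists2 hin.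
pose M := \sum_a v a *: A a.
have XE : \sum_a cR (v a) *: beta a = iC R *: map_mx (@cR R) M.
  rewrite map_mx_sum scaler_sumr; apply: eq_bigr => a _.
  by rewrite betaE map_mxZ !scalerA mulrC.
have psdM : psdmx (1%:M + iC R *: map_mx (@cR R) M).
  by rewrite -XE; apply: psdmxZ hrho.1; rewrite invr_gt0 ltr0n.
have skewM := hermmx_one_add_iC_skew psdM.1.
have frob := psdmx_one_add_iC_sum_sqr skewM psdM.
have trX := mxtrace_sqr_sum_orth (fun a => cR (v a)) horth.
rewrite XE mxtrace_sqr_iC_skew // in trX.
have sum_v2 : \sum_a v a ^+ 2 = 2 * \sum_j \sum_k M j k ^+ 2.
  apply: (@complexI R).
  change (cR (\sum_a v a ^+ 2) = cR (2 * \sum_j \sum_k M j k ^+ 2)).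
  rewrite rmorphM /= trX rmorph_nat mulrC divfK ?pnatr_eq0 // rmorph_sum.
  by apply: eq_bigr => a _; rewrite rmorphXn.
apply: bounds_of_le14; rewrite sumr_ge0 => [|a _]; last exact: sqr_ge0.
by rewrite sum_v2; lra.
Qed.
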